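(* Let the language $\mathcal{L}(\Rightarrow)$, Yalcin's semantics, validity, informational consequence and the Yalcin logic be as described in the context. Then the set of formulas of $\mathcal{L}(\Rightarrow)$ that are valid according to Yalcin's semantics is exactly the Yalcin logic. Moreover, for all formulas $\sigma_1,\dots,\sigma_n,\varphi$ of $\mathcal{L}(\Rightarrow)$, $\varphi$ is an informational consequence of $\{\sigma_1,\dots,\sigma_n\}$ if and only if $(\Box\sigma_1\wedge\dots\wedge\Box\sigma_n)\to\Box\varphi$ is a theorem of the Yalcin logic.
   Context: The language $\mathcal{L}(\Rightarrow)$ is given by $\varphi::= p\mid \neg\varphi\mid (\varphi\wedge\varphi)\mid \Box\varphi \mid (\varphi\Rightarrow\varphi)$, where $p$ ranges over a fixed set of propositional variables; $\vee,\to,\leftrightarrow,\bot$ are defined as usual and $\Diamond\varphi:=\neg\Box\neg\varphi$. $\mathcal{L}$ is the set of formulas not containing $\Rightarrow$; a formula is nonmodal if it is in $\mathcal{L}$ and contains no $\Box$. A model is $\mathcal{M}=\langle W,V\rangle$ with $W$ a nonempty set and $V$ assigning to each propositional variable a subset of $W$. Yalcin's semantics evaluates formulas at $\mathcal{M},w,X$ with $w\in W$ and $X\subseteq W$ (an information state): $\mathcal{M},w,X\vDash p$ iff $w\in V(p)$; negation and conjunction are Boolean; $\mathcal{M},w,X\vDash\Box\varphi$ iff $\mathcal{M},v,X\vDash\varphi$ for all $v\in X$; $\mathcal{M},w,X\vDash\varphi\Rightarrow\psi$ iff $\mathcal{M},w,\llbracket\varphi\rrbracket^{\mathcal{M},X}\vDash\Box\psi$,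 where $\llbracket\varphi\rrbracket^{\mathcal{M},X}=\{v\in X\mid \mathcal{M},v,X\vDash\varphi\}$. A formula is valid iff it is true at every $w$ relative to every $X\subseteq W$ in every model. $\mathcal{M},X\vDash\varphi$ means $\mathcal{M},w,X\vDash\varphi$ for all $w\in X$; $\varphi$ is an informational consequence of a set $\Sigma$ iff for every model $\mathcal{M}$ and every $X\subseteq W$, if $\mathcal{M},X\vDash\sigma$ for all $\sigma\in\Sigma$ then $\mathcal{M},X\vDash\varphi$. The Yalcin logic is the smallest set of $\mathcal{L}(\Rightarrow)$ formulas closed under replacement of equivalents (if $\alpha\leftrightarrow\beta$ is in the set and $\varphi'$ results from $\varphi$ by replacing an occurrence of $\alpha$ by $\beta$, then $\varphi\leftrightarrow\varphi'$ is in the set), modus ponens for $\to$, and necessitation for $\Box$ (from $\varphi$ infer $\Box\varphi$), and containing all substitution instances of propositional tautologies and all instances of: K: $\Box(\varphi\to\psi)\to(\Box\varphi\to\Box\psi)$; 4: $\Diamond\Diamond\varphi\to\Diamond\varphi$; 5: $\Diamond\Box\varphi\to\Box\varphi$; I1: $(\varphi\Rightarrow\pi)\leftrightarrow\Box(\varphi\to\pi)$ for $\pi$ nonmodal; I2: $(\varphi\Rightarrow(\alpha\wedge\beta))\leftrightarrow((\varphi\Rightarrow\alpha)\wedge(\varphi\Rightarrow\beta))$; I3: $(\varphi\Rightarrow\alpha)\to(\varphi\Rightarrow(\alpha\vee\beta))$; I4: $(\varphi\Rightarrow\alpha)\to(\varphi\Rightarrow\Box\alpha)$; I5: $((\varphi\Rightarrow(\alpha\vee\Box\beta))\wedge\neg(\varphi\Rightarrow\beta))\to(\varphi\Rightarrow\alpha)$;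 I6: $((\varphi\Rightarrow(\alpha\vee\Diamond\beta))\wedge(\varphi\Rightarrow\neg\beta))\to(\varphi\Rightarrow\alpha)$; I7: $\neg(\varphi\Rightarrow\beta)\to(\varphi\Rightarrow\Diamond\neg\beta)$. *)

From Stdlib Require Import List.
Import ListNotations.

Inductive form : Type :=
| Var : nat -> form
| Neg : form -> form
| And : form -> form -> form
| Box : form -> form
| Cond : form -> form -> form.

Definition Or (a b : form) : form := Neg (And (Neg a) (Neg b)).
Definition Imp (a b : form) : form := Neg (And a (Neg b)).
Definition Iff (a b : form) : form := And (Imp a b) (Imp b a).
Definition Bot : form := And (Var 0) (Neg (Var 0)).
Definition Top : form := Neg Bot.
Definition Dia (a : form) : form := Neg (Box (Neg a)).

Fixpoint nonmodal (f : form) : Prop :=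
  match f with
  | Var _ => True
  | Neg a => nonmodal a
  | And a b => nonmodal a /\ nonmodal b
  | Box _ => False
  | Cond _ _ => False
  end.

(* Yalcin's semantics. A model is (W, V) with W nonempty; X is an info state. *)
Fixpoint sat {W : Type} (V : nat -> W -> Prop) (f : form) (X : W -> Prop) (w : W)
  : Prop :=
  match f with
  | Var p => V p w
  | Neg a => ~ sat V a X w
  | And a b => sat V a X w /\ sat V b X w
  | Box a => forall v, X v -> sat V a X v
  | Cond a b =>
      let Y := fun v => X v /\ sat V a X v in
      forall v, Y v -> sat V b Y v
  end.

Definition valid (f : form) : Prop :=
  forall (W : Type) (V : nat -> W -> Prop) (X : W -> Prop) (w : W),
    sat V f X w.

Definition sat_state {W : Type} (V : nat -> W -> Prop) (X : W -> Prop) (f : form)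
  : Prop := forall w, X w -> sat V f X w.

Definition inf_cons (S : list form) (f : form) : Prop :=
  forall (W : Type) (V : nat -> W -> Prop) (X : W -> Prop),
    inhabited W ->
    (forall s, In s S -> sat_state V X s) -> sat_state V X f.

Inductive pform : Type :=
| PVar : nat -> pform
| PNeg : pform -> pform
| PAnd : pform -> pform -> pform.

Fixpoint peval (v : nat -> bool) (p : pform) : bool :=
  match p with
  | PVar n => v n
  | PNeg a => negb (peval v a)
  | PAnd a b => andb (peval v a) (peval v b)
  end.

Definition tautology (p : pform) : Prop := forall v, peval v p = true.

Fixpoint psubst (s : nat -> form) (p : pform) : form :=
  match p with
  | PVar n => s n
  | PNeg a => Neg (psubst s a)
  | PAnd a b => And (psubst s a) (psubst s b)
  end.

Inductive replace (a b : form) : form -> form -> Prop :=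
| rep_here : replace a b a b
| rep_neg : forall f f', replace a b f f' -> replace a b (Neg f) (Neg f')
| rep_andl : forall f f' g, replace a b f f' -> replace a b (And f g) (And f' g)
| rep_andr : forall f g g', replace a b g g' -> replace a b (And f g) (And f g')
| rep_box : forall f f', replace a b f f' -> replace a b (Box f) (Box f')
| rep_condl : forall f f' g, replace a b f f' -> replace a b (Cond f g) (Cond f' g)
| rep_condr : forall f g g', replace a b g g' -> replace a b (Cond f g) (Cond f g').

Inductive yalcin : form -> Prop :=
| Y_taut : forall p s, tautology p -> yalcin (psubst s p)
| Y_K : forall f g, yalcin (Imp (Box (Imp f g)) (Imp (Box f) (Box g)))
| Y_4 : forall f, yalcin (Imp (Dia (Dia f)) (Dia f))
| Y_5 : forall f, yalcin (Imp (Dia (Box f)) (Box f))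
| Y_I1 : forall f p, nonmodal p -> yalcin (Iff (Cond f p) (Box (Imp f p)))
| Y_I2 : forall f a b,
    yalcin (Iff (Cond f (And a b)) (And (Cond f a) (Cond f b)))
| Y_I3 : forall f a b, yalcin (Imp (Cond f a) (Cond f (Or a b)))
| Y_I4 : forall f a, yalcin (Imp (Cond f a) (Cond f (Box a)))
| Y_I5 : forall f a b,
    yalcin (Imp (And (Cond f (Or a (Box b))) (Neg (Cond f b))) (Cond f a))
| Y_I6 : forall f a b,
    yalcin (Imp (And (Cond f (Or a (Dia b))) (Cond f (Neg b))) (Cond f a))
| Y_I7 : forall f b, yalcin (Imp (Neg (Cond f b)) (Cond f (Dia (Neg b))))
| Y_RE : forall a b f f', yalcin (Iff a b) -> replace a b f f' -> yalcin (Iff f f')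
| Y_MP : forall f g, yalcin (Imp f g) -> yalcin f -> yalcin g
| Y_Nec : forall f, yalcin f -> yalcin (Box f).

Fixpoint bigAnd (l : list form) : form :=
  match l with
  | [] => Top
  | [a] => a
  | a :: l' => And a (bigAnd l')
  end.

From Stdlib Require Import List Bool Classical ClassicalEpsilon.
Import ListNotations.

(* For completeness, every formula
   is provably equivalent to a flat one, in which [Box] is applied only to
   nonmodal formulas and [Cond] does not occur.  Axioms 4 and 5 make boxed
   formulas and their negations rigid, so [Box g] splits into cases over the
   truth values of the box atoms of [g], each case being [Box] of a nonmodal
   formula; axioms I2, I4 and I7 likewise split [Cond a b] over the values of
   [Cond a x] for the box atoms [Box x] of [b], and I1 turns [Cond a y], with
   [y] nonmodal, into [Box (Imp a y)].  A valid flat formula [f] is a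
   propositional consequence of the theorems [Box t1 /\ ... /\ Box tn -> Box x]:
   given a valuation [e] of its atoms respecting these theorems, evaluate [f] in
   the canonical model whose worlds are valuations, at [e], relative to the
   state of the worlds satisfying every [t] with [e (Box t) = true].
   Informational consequence reduces to validity because [M, X |= phi] says
   exactly that [Box phi] holds relative to [X]. *)

(** * Propositional reasoning *)

Fixpoint beval (e : form -> bool) (f : form) : bool :=
  match f with
  | Neg a => negb (beval e a)
  | And a b => beval e a && beval e b
  | _ => e f
  end.

Definition form_eq_dec (f g : form) : {f = g} + {f <> g}.
Proof. decide equality; apply PeanoNat.Nat.eq_dec. Defined.

Fixpoint prop_atoms (f : form) : list form :=
  match f with
  | Neg a => prop_atoms a
  | And a b => prop_atoms a ++ prop_atoms b
  | _ => [f]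
  end.

Fixpoint index_of (a : form) (l : list form) : nat :=
  match l with
  | [] => 0
  | x :: l' => if form_eq_dec x a then 0 else S (index_of a l')
  end.

Lemma nth_index_of a l : In a l -> nth (index_of a l) l Top = a.
Proof.
  induction l as [|x l IH]; simpl; intros Ha; [contradiction|].
  destruct (form_eq_dec x a) as [->|ne]; [reflexivity|].
  destruct Ha as [->|Ha]; [contradiction|auto].
Qed.

Fixpoint abstract (l : list form) (f : form) : pform :=
  match f with
  | Neg a => PNeg (abstract l a)
  | And a b => PAnd (abstract l a) (abstract l b)
  | _ => PVar (index_of f l)
  end.

Lemma psubst_abstract l f :
  incl (prop_atoms f) l -> psubst (fun n => nth n l Top) (abstract l f) = f.
Proof.
  induction f; simpl; intros Hl;
    try (apply nth_index_of, Hl; left; reflexivity).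
  - now rewrite IHf.
  - apply incl_app_inv in Hl as [Hl1 Hl2]. now rewrite IHf1, IHf2.
Qed.

Lemma peval_abstract v l f :
  peval v (abstract l f) = beval (fun g => v (index_of g l)) f.
Proof. induction f; simpl; congruence. Qed.

Lemma yalcin_of_beval_tautology f : (forall e, beval e f = true) -> yalcin f.
Proof.
  intros Hf. rewrite <- (psubst_abstract (prop_atoms f) f) by apply incl_refl.
  apply Y_taut. intros v. rewrite peval_abstract. apply Hf.
Qed.

Lemma beval_Imp e a b :
  beval e (Imp a b) = true <-> (beval e a = true -> beval e b = true).
Proof. simpl. destruct (beval e a), (beval e b); simpl; intuition congruence. Qed.

Lemma beval_Iff e a b : beval e (Iff a b) = true <-> beval e a = beval e b.
Proof. simpl. destruct (beval e a), (beval e b); simpl; intuition congruence. Qed.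

Lemma beval_Top e : beval e Top = true.
Proof. simpl. now destruct (e (Var 0)). Qed.

Lemma beval_Bot e : beval e Bot = false.
Proof. simpl. now destruct (e (Var 0)). Qed.

(* Excluded middle on [yalcin c] discards the members of [C] that are not
   theorems. *)
Lemma yalcin_of_entails_theorems (C : list form) f :
  (forall e, (forall c, In c C -> yalcin c -> beval e c = true) ->
             beval e f = true) ->
  yalcin f.
Proof.
  revert f; induction C as [|c C IH]; intros f Hf.
  - apply yalcin_of_beval_tautology. intros e. apply Hf. intros c [].
  - destruct (classic (yalcin c)) as [Hc|Hc].
    + apply (Y_MP c f); [|exact Hc]. apply IH. intros e He.
      apply beval_Imp. intros Ec. apply Hf. intros c' [<-|Hc'] Hy; auto.
    + apply IH. intros e He. apply Hf. intros c' [<-|Hc'] Hy; [contradiction|auto].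
Qed.

Ltac bool_cases :=
  let e := fresh "e" in
  intro e; unfold Imp, Iff, Or, Dia, Top, Bot; simpl;
  repeat (match goal with
          | |- context [beval e ?x] => destruct (beval e x)
          | |- context [e ?x] => destruct (e x)
          end; simpl);
  reflexivity.

(* Closes [yalcin f] when [f] follows propositionally from the [yalcin]
   hypotheses of the context, formulas other than negations and conjunctions
   being treated as atoms. *)
Ltac prop_logic :=
  repeat match goal with
         | H : yalcin ?a |- yalcin _ => apply (Y_MP a); [clear H | exact H]
         end;
  apply yalcin_of_beval_tautology; bool_cases.

Lemma box_mono a b : yalcin (Imp a b) -> yalcin (Imp (Box a) (Box b)).
Proof. intros H. apply Y_Nec in H. pose proof (Y_K a b). prop_logic. Qed.

Lemma box_dist a b : yalcin (Imp (Box (Iff a b)) (Iff (Box a) (Box b))).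
Proof.
  assert (H1 : yalcin (Imp (Iff a b) (Imp a b))) by prop_logic.
  assert (H2 : yalcin (Imp (Iff a b) (Imp b a))) by prop_logic.
  apply box_mono in H1, H2. pose proof (Y_K a b). pose proof (Y_K b a).
  prop_logic.
Qed.

Lemma box_iff a b : yalcin (Iff a b) -> yalcin (Iff (Box a) (Box b)).
Proof. intros H. apply Y_Nec in H. pose proof (box_dist a b). prop_logic. Qed.

Lemma box_and a b : yalcin (Imp (And (Box a) (Box b)) (Box (And a b))).
Proof.
  assert (H : yalcin (Imp a (Imp b (And a b)))) by prop_logic.
  apply box_mono in H. pose proof (Y_K b (And a b)). prop_logic.
Qed.

Lemma box4 a : yalcin (Imp (Box a) (Box (Box a))).
Proof.
  pose proof (Y_4 (Neg a)) as H4. unfold Dia in H4.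
  assert (E1 : yalcin (Iff (Box a) (Box (Neg (Neg a))))).
  { apply box_iff. prop_logic. }
  assert (E2 : yalcin (Iff (Box (Neg (Neg (Box (Neg (Neg a)))))) (Box (Box a)))).
  { apply box_iff. clear H4. prop_logic. }
  prop_logic.
Qed.

Lemma box5 a : yalcin (Imp (Neg (Box a)) (Box (Neg (Box a)))).
Proof. pose proof (Y_5 a). prop_logic. Qed.

Lemma cond_congr_l c c' x :
  yalcin (Iff c c') -> yalcin (Iff (Cond c x) (Cond c' x)).
Proof. intros H. apply (Y_RE c c'); [exact H | apply rep_condl, rep_here]. Qed.

Lemma cond_congr_r c x y :
  yalcin (Iff x y) -> yalcin (Iff (Cond c x) (Cond c y)).
Proof. intros H. apply (Y_RE x y); [exact H | apply rep_condr, rep_here]. Qed.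

Lemma cond_and c x y :
  yalcin (Imp (And (Cond c x) (Cond c y)) (Cond c (And x y))).
Proof. pose proof (Y_I2 c x y). prop_logic. Qed.

Lemma cond_mono c x y : yalcin (Imp x y) -> yalcin (Imp (Cond c x) (Cond c y)).
Proof.
  intros H. assert (E : yalcin (Iff x (And x y))) by prop_logic.
  apply (cond_congr_r c) in E. pose proof (Y_I2 c x y). clear H. prop_logic.
Qed.

Lemma cond_top c : yalcin (Cond c Top).
Proof.
  pose proof (Y_I1 c Top (conj I I)).
  assert (Htop : yalcin (Box (Imp c Top))) by (apply Y_Nec; prop_logic).
  prop_logic.
Qed.

(** * Case analysis on literals *)

Definition signed (p : form) (b : bool) : form := if b then p else Neg p.

Fixpoint guard (L : form -> form) (d : list (form * bool)) : form :=
  match d with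
  | [] => Top
  | (x, b) :: d' => And (signed (L x) b) (guard L d')
  end.

Fixpoint assignments (M : list form) : list (list (form * bool)) :=
  match M with
  | [] => [[]]
  | x :: M' =>
      map (cons (x, true)) (assignments M') ++ map (cons (x, false)) (assignments M')
  end.

Fixpoint disj (l : list form) : form :=
  match l with
  | [] => Bot
  | a :: l' => Or a (disj l')
  end.

Definition cases (L : form -> form) (M : list form)
  (B : list (form * bool) -> form) : form :=
  disj (map (fun d => And (guard L d) (B d)) (assignments M)).

Lemma assignments_fst M d : In d (assignments M) -> map fst d = M.
Proof.
  revert d; induction M as [|x M IH]; simpl; intros d Hd.
  - now destruct Hd as [<-|[]].
  - apply in_app_or in Hd as [Hd|Hd]; apply in_map_iff in Hd as [d' [<- Hd']];
      simpl; f_equal; auto.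
Qed.

Lemma graph_in_assignments (g : form -> bool) M :
  In (map (fun x => (x, g x)) M) (assignments M).
Proof.
  induction M as [|x M IH]; simpl; [now left|].
  apply in_or_app. destruct (g x); [left|right]; now apply in_map.
Qed.

Lemma beval_signed e p b : beval e (signed p b) = true <-> beval e p = b.
Proof. destruct b; simpl; destruct (beval e p); simpl; intuition congruence. Qed.

Lemma beval_guard e L d :
  beval e (guard L d) = true <-> (forall x b, In (x, b) d -> beval e (L x) = b).
Proof.
  induction d as [|[x b] d IH]; simpl guard.
  - rewrite beval_Top. split; [intros _ x b []|reflexivity].
  - change (beval e (signed (L x) b) && beval e (guard L d) = true
            <-> (forall y c, In (y, c) ((x, b) :: d) -> beval e (L y) = c)).
    rewrite andb_true_iff, beval_signed, IH. split.
    + intros [Hx Hd] y c [[=<- <-]|Hyc]; auto.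
    + intros H. split; [apply H; now left | intros y c Hyc; apply H; now right].
Qed.

Lemma beval_guard_graph e L M :
  beval e (guard L (map (fun x => (x, beval e (L x))) M)) = true.
Proof.
  apply beval_guard. intros x b Hxb.
  apply in_map_iff in Hxb as [y [[=<- <-] _]]. reflexivity.
Qed.

Lemma beval_disj e l :
  beval e (disj l) = true <-> exists x, In x l /\ beval e x = true.
Proof.
  induction l as [|a l IH]; simpl disj.
  - rewrite beval_Bot. split; [discriminate | intros [x [[] _]]].
  - change (negb (negb (beval e a) && negb (beval e (disj l))) = true
            <-> exists x, In x (a :: l) /\ beval e x = true).
    rewrite negb_andb, !negb_involutive, orb_true_iff, IH. split.
    + intros [Ha|[x [Hx Hb]]]; [exists a | exists x]; simpl; auto.
    + intros [x [[<-|Hx] Hb]]; [left|right; exists x]; auto.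
Qed.

Lemma beval_cases e L M B :
  beval e (cases L M B) = true <->
  exists d, In d (assignments M) /\ beval e (guard L d) = true /\ beval e (B d) = true.
Proof.
  unfold cases. rewrite beval_disj. split.
  - intros [y [Hy Hb]]. apply in_map_iff in Hy as [d [<- Hd]].
    apply andb_true_iff in Hb. now exists d.
  - intros [d [Hd HB]]. exists (And (guard L d) (B d)). split.
    + now apply (in_map (fun d => And (guard L d) (B d))).
    + now apply andb_true_iff.
Qed.

Lemma yalcin_cases L M A B :
  (forall d, map fst d = M -> yalcin (Imp (guard L d) (Iff A (B d)))) ->
  yalcin (Iff A (cases L M B)).
Proof.
  intros HB.
  apply (yalcin_of_entails_theorems
           (map (fun d => Imp (guard L d) (Iff A (B d))) (assignments M))).
  intros e He.
  assert (Hcase : forall d, In d (assignments M) -> beval e (guard L d) = true ->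
                            beval e A = beval e (B d)).
  { intros d Hd Hg. apply beval_Iff. revert Hg. apply beval_Imp, He.
    - now apply (in_map (fun d => Imp (guard L d) (Iff A (B d)))).
    - now apply HB, assignments_fst. }
  apply beval_Iff, eq_iff_eq_true. rewrite beval_cases. split.
  - intros HA. set (d0 := map (fun x => (x, beval e (L x))) M).
    assert (Hd0 : In d0 (assignments M)) by apply graph_in_assignments.
    assert (Hg0 : beval e (guard L d0) = true) by apply beval_guard_graph.
    exists d0. rewrite <- (Hcase d0); auto.
  - intros [d [Hd [Hg HBd]]]. now rewrite (Hcase d).
Qed.

Lemma cases_congr L L' M B B' :
  (forall x, In x M -> yalcin (Iff (L x) (L' x))) ->
  (forall d, map fst d = M -> yalcin (Iff (B d) (B' d))) ->
  yalcin (Iff (cases L M B) (cases L' M B')).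
Proof.
  intros HL HB.
  apply (yalcin_of_entails_theorems
           (map (fun x => Iff (L x) (L' x)) M ++
            map (fun d => Iff (B d) (B' d)) (assignments M))).
  intros e He.
  assert (EL : forall x, In x M -> beval e (L x) = beval e (L' x)).
  { intros x Hx. apply beval_Iff, He; auto.
    apply in_or_app. left. now apply (in_map (fun x => Iff (L x) (L' x))). }
  assert (EB : forall d, In d (assignments M) -> beval e (B d) = beval e (B' d)).
  { intros d Hd. apply beval_Iff, He; [|now apply HB, assignments_fst].
    apply in_or_app. right. now apply (in_map (fun d => Iff (B d) (B' d))). }
  assert (EG : forall d, In d (assignments M) ->
                         beval e (guard L d) = beval e (guard L' d)).
  { intros d Hd. apply eq_iff_eq_true. rewrite !beval_guard.
    assert (Hx : forall x b, In (x, b) d -> In x M).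
    { intros x b Hxb. rewrite <- (assignments_fst M d Hd).
      exact (in_map fst d (x, b) Hxb). }
    split; intros H x b Hxb; [rewrite <- EL | rewrite EL]; eauto. }
  apply beval_Iff, eq_iff_eq_true. rewrite !beval_cases.
  split; intros [d [Hd [Hg Hb]]]; exists d;
    [rewrite <- EG, <- EB | rewrite EG, EB]; auto.
Qed.

(** * Reduction to flat formulas *)

Fixpoint flat (g : form) : Prop :=
  match g with
  | Var _ => True
  | Neg a => flat a
  | And a b => flat a /\ flat b
  | Box x => nonmodal x
  | Cond _ _ => False
  end.

Fixpoint box_atoms (g : form) : list form :=
  match g with
  | Neg a => box_atoms a
  | And a b => box_atoms a ++ box_atoms b
  | Box x => [x]
  | _ => []
  end.

Fixpoint lookup (x : form) (d : list (form * bool)) : option bool :=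
  match d with
  | [] => None
  | (y, b) :: d' => if form_eq_dec y x then Some b else lookup x d'
  end.

Fixpoint subst_boxes (d : list (form * bool)) (g : form) : form :=
  match g with
  | Neg a => Neg (subst_boxes d a)
  | And a b => And (subst_boxes d a) (subst_boxes d b)
  | Box x =>
      match lookup x d with
      | Some true => Top
      | Some false => Bot
      | None => g
      end
  | _ => g
  end.

Lemma lookup_in x d :
  In x (map fst d) -> exists b, lookup x d = Some b /\ In (x, b) d.
Proof.
  induction d as [|[y b] d IH]; simpl; intros Hx; [contradiction|].
  destruct (form_eq_dec y x) as [->|ne]; [exists b; auto|].
  destruct Hx as [Hx|Hx]; [contradiction|].
  destruct (IH Hx) as [c [Hc Hin]]. exists c; auto.
Qed.

Lemma box_atoms_nonmodal g x : flat g -> In x (box_atoms g) -> nonmodal x.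
Proof.
  induction g; simpl; intros Hg Hx; try contradiction; auto.
  - destruct Hg. apply in_app_or in Hx as [Hx|Hx]; auto.
  - now destruct Hx as [<-|[]].
Qed.

Lemma beval_subst_boxes e d g :
  beval e (guard Box d) = true -> incl (box_atoms g) (map fst d) ->
  beval e (subst_boxes d g) = beval e g.
Proof.
  intros Hd. induction g; simpl; intros Hg; auto.
  - now rewrite IHg.
  - apply incl_app_inv in Hg as [Hg1 Hg2]. now rewrite IHg1, IHg2.
  - destruct (lookup_in g d) as [b [-> Hin]]; [apply Hg; now left|].
    rewrite beval_guard in Hd. specialize (Hd g b Hin). simpl in Hd. subst b.
    destruct (e (Box g)); [apply beval_Top | apply beval_Bot].
Qed.

Lemma nonmodal_subst_boxes d g :
  flat g -> incl (box_atoms g) (map fst d) -> nonmodal (subst_boxes d g).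
Proof.
  induction g; simpl; intros Hg Hi; auto.
  - apply incl_app_inv in Hi as [Hi1 Hi2]. destruct Hg. auto.
  - destruct (lookup_in g d) as [[|] [-> _]]; [apply Hi; now left| |]; simpl; auto.
Qed.

Lemma guard_subst_boxes d g :
  incl (box_atoms g) (map fst d) ->
  yalcin (Imp (guard Box d) (Iff g (subst_boxes d g))).
Proof.
  intros Hi. apply yalcin_of_beval_tautology. intros e.
  apply beval_Imp. intros Hd. apply beval_Iff. symmetry.
  now apply beval_subst_boxes.
Qed.

Lemma guard_box_rigid d : yalcin (Imp (guard Box d) (Box (guard Box d))).
Proof.
  induction d as [|[x b] d IH]; simpl guard.
  - assert (H : yalcin (Box Top)) by (apply Y_Nec; prop_logic). prop_logic.
  - assert (Hx : yalcin (Imp (signed (Box x) b) (Box (signed (Box x) b)))).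
    { destruct b; [apply box4 | apply box5]. }
    pose proof (box_and (signed (Box x) b) (guard Box d)). prop_logic.
Qed.

Lemma box_guard_subst_boxes d g :
  incl (box_atoms g) (map fst d) ->
  yalcin (Imp (guard Box d) (Iff (Box g) (Box (subst_boxes d g)))).
Proof.
  intros Hi. pose proof (guard_box_rigid d).
  pose proof (box_mono _ _ (guard_subst_boxes d g Hi)).
  pose proof (box_dist g (subst_boxes d g)). prop_logic.
Qed.

Lemma cond_guard c d : yalcin (Imp (guard (Cond c) d) (Cond c (guard Box d))).
Proof.
  induction d as [|[x b] d IH]; simpl guard.
  - pose proof (cond_top c). prop_logic.
  - assert (Hx : yalcin (Imp (signed (Cond c x) b) (Cond c (signed (Box x) b)))).
    { destruct b; simpl; [apply Y_I4|].
      assert (H : yalcin (Imp (Dia (Neg x)) (Neg (Box x)))).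
      { assert (H : yalcin (Imp (Box x) (Box (Neg (Neg x))))).
        { apply box_mono. prop_logic. }
        prop_logic. }
      apply (cond_mono c) in H. pose proof (Y_I7 c x). prop_logic. }
    pose proof (cond_and c (signed (Box x) b) (guard Box d)). prop_logic.
Qed.

Lemma cond_guard_subst_boxes c d b :
  incl (box_atoms b) (map fst d) ->
  yalcin (Imp (guard (Cond c) d) (Iff (Cond c b) (Cond c (subst_boxes d b)))).
Proof.
  intros Hi. pose proof (guard_subst_boxes d b Hi) as E.
  assert (H1 : yalcin (Imp (And (guard Box d) b) (subst_boxes d b))) by prop_logic.
  assert (H2 : yalcin (Imp (And (guard Box d) (subst_boxes d b)) b)) by prop_logic.
  apply (cond_mono c) in H1, H2.
  pose proof (cond_guard c d). pose proof (cond_and c (guard Box d) b).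
  pose proof (cond_and c (guard Box d) (subst_boxes d b)).
  clear E. prop_logic.
Qed.

Definition red_box (g : form) : form :=
  cases Box (box_atoms g) (fun d => Box (subst_boxes d g)).

Definition red_cond (a b : form) : form :=
  cases (fun x => red_box (Imp a x)) (box_atoms b)
    (fun d => red_box (Imp a (subst_boxes d b))).

Lemma red_box_correct g : yalcin (Iff (Box g) (red_box g)).
Proof.
  apply yalcin_cases. intros d Hd.
  apply box_guard_subst_boxes. rewrite Hd. apply incl_refl.
Qed.

Lemma cond_nonmodal_red_box a y :
  nonmodal y -> yalcin (Iff (Cond a y) (red_box (Imp a y))).
Proof.
  intros Hy. pose proof (Y_I1 a y Hy). pose proof (red_box_correct (Imp a y)).
  prop_logic.
Qed.

Lemma red_cond_correct a b : flat b -> yalcin (Iff (Cond a b) (red_cond a b)).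
Proof.
  intros Hb.
  assert (H1 : yalcin (Iff (Cond a b)
                  (cases (Cond a) (box_atoms b) (fun d => Cond a (subst_boxes d b))))).
  { apply yalcin_cases. intros d Hd.
    apply cond_guard_subst_boxes. rewrite Hd. apply incl_refl. }
  assert (H2 : yalcin (Iff (cases (Cond a) (box_atoms b)
                              (fun d => Cond a (subst_boxes d b)))
                           (red_cond a b))).
  { apply cases_congr.
    - intros x Hx. now apply cond_nonmodal_red_box, (box_atoms_nonmodal b).
    - intros d Hd. apply cond_nonmodal_red_box, nonmodal_subst_boxes; [exact Hb|].
      rewrite Hd. apply incl_refl. }
  prop_logic.
Qed.

Lemma flat_of_nonmodal x : nonmodal x -> flat x.
Proof. induction x; simpl; tauto. Qed.

Lemma flat_guard L d :
  (forall x, In x (map fst d) -> flat (L x)) -> flat (guard L d).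
Proof.
  induction d as [|[x b] d IH]; simpl; intros HL; [tauto|].
  split; [destruct b; simpl; auto | auto].
Qed.

Lemma flat_disj l : (forall x, In x l -> flat x) -> flat (disj l).
Proof. induction l as [|a l IH]; simpl; intros Hl; [tauto|]. auto. Qed.

Lemma flat_cases L M B :
  (forall x, In x M -> flat (L x)) ->
  (forall d, map fst d = M -> flat (B d)) ->
  flat (cases L M B).
Proof.
  intros HL HB. apply flat_disj. intros y Hy.
  apply in_map_iff in Hy as [d [<- Hd]]. apply assignments_fst in Hd.
  split; [apply flat_guard; rewrite Hd|]; auto.
Qed.

Lemma flat_red_box g : flat g -> flat (red_box g).
Proof.
  intros Hg. apply flat_cases.
  - intros x Hx. exact (box_atoms_nonmodal g x Hg Hx).
  - intros d Hd. apply nonmodal_subst_boxes; [exact Hg|]. rewrite Hd. apply incl_refl.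
Qed.

Lemma flat_red_cond a b : flat a -> flat b -> flat (red_cond a b).
Proof.
  intros Ha Hb.
  assert (HI : forall y, nonmodal y -> flat (red_box (Imp a y))).
  { intros y Hy. apply flat_red_box. simpl. auto using flat_of_nonmodal. }
  apply flat_cases.
  - intros x Hx. apply HI, (box_atoms_nonmodal b x Hb Hx).
  - intros d Hd. apply HI, nonmodal_subst_boxes; [exact Hb|]. rewrite Hd. apply incl_refl.
Qed.

Fixpoint red (f : form) : form :=
  match f with
  | Var n => Var n
  | Neg a => Neg (red a)
  | And a b => And (red a) (red b)
  | Box a => red_box (red a)
  | Cond a b => red_cond (red a) (red b)
  end.

Lemma flat_red f : flat (red f).
Proof. induction f; simpl; auto using flat_red_box, flat_red_cond. Qed.

Lemma red_correct f : yalcin (Iff f (red f)).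
Proof.
  induction f; simpl.
  - prop_logic.
  - prop_logic.
  - prop_logic.
  - apply box_iff in IHf. pose proof (red_box_correct (red f)). prop_logic.
  - apply (cond_congr_l f1 (red f1) f2) in IHf1.
    apply (cond_congr_r (red f1) f2 (red f2)) in IHf2.
    pose proof (red_cond_correct (red f1) (red f2) (flat_red f2)). prop_logic.
Qed.

(** * Soundness *)

Section Soundness.

Context {W : Type} (V : nat -> W -> Prop).

Lemma sat_Imp a b X w : sat V (Imp a b) X w <-> (sat V a X w -> sat V b X w).
Proof. unfold Imp; simpl. split; [intros H Ha; apply NNPP; tauto | tauto]. Qed.

Lemma sat_Iff a b X w : sat V (Iff a b) X w <-> (sat V a X w <-> sat V b X w).
Proof.
  unfold Iff. cbn [sat]. rewrite !sat_Imp. tauto.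
Qed.

Lemma sat_Or a b X w : sat V (Or a b) X w <-> sat V a X w \/ sat V b X w.
Proof. unfold Or; simpl. split; [intros H; apply NNPP; tauto | tauto]. Qed.

Lemma sat_Dia a X w : sat V (Dia a) X w <-> exists v, X v /\ sat V a X v.
Proof.
  unfold Dia; simpl. split.
  - intros H. apply NNPP. intros Hn. apply H. intros v Hv Ha. apply Hn. eauto.
  - intros [v [Hv Ha]] H. exact (H v Hv Ha).
Qed.

Lemma sat_ext f X X' w :
  (forall v, X v <-> X' v) -> (sat V f X w <-> sat V f X' w).
Proof.
  revert X X' w; induction f; simpl; intros X X' w HX.
  - tauto.
  - now rewrite (IHf X X' w HX).
  - now rewrite (IHf1 X X' w HX), (IHf2 X X' w HX).
  - split; intros H v Hv; apply (IHf X X' v HX), H, HX, Hv.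
  - assert (HY : forall v, X v /\ sat V f1 X v <-> X' v /\ sat V f1 X' v).
    { intros v. now rewrite (IHf1 X X' v HX), HX. }
    split; intros H v Hv; apply (IHf2 _ _ v HY), H, HY, Hv.
Qed.

Lemma nonmodal_sat_indep p X Y w : nonmodal p -> (sat V p X w <-> sat V p Y w).
Proof.
  induction p; simpl; intros Hp; try contradiction.
  - tauto.
  - now rewrite IHp.
  - destruct Hp. now rewrite IHp1, IHp2.
Qed.

Lemma sat_tautology p s X w : tautology p -> sat V (psubst s p) X w.
Proof.
  intros Hp.
  set (v := fun n => if excluded_middle_informative (sat V (s n) X w) then true else false).
  enough (E : forall q, peval v q = true <-> sat V (psubst s q) X w) by apply E, Hp.
  induction q; simpl.
  - unfold v. destruct excluded_middle_informative; split; auto; discriminate.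
  - rewrite <- IHq. destruct (peval v q); simpl; split; congruence.
  - now rewrite andb_true_iff, IHq1, IHq2.
Qed.

Lemma sat_replace a b f f' :
  (forall X w, sat V a X w <-> sat V b X w) ->
  replace a b f f' -> forall X w, sat V f X w <-> sat V f' X w.
Proof.
  intros Hab Hr. induction Hr; simpl; intros X w; auto.
  - now rewrite IHHr.
  - now rewrite IHHr.
  - now rewrite IHHr.
  - split; intros H v Hv; apply IHHr, H, Hv.
  - assert (HY : forall v, X v /\ sat V f X v <-> X v /\ sat V f' X v).
    { intros v. now rewrite IHHr. }
    split; intros H v Hv; apply (sat_ext _ _ _ v HY), H, HY, Hv.
  - split; intros H v Hv; apply IHHr, H, Hv.
Qed.

End Soundness.

Lemma soundness f : yalcin f -> valid f.
Proof.
  intros Hf; induction Hf; intros W V X w;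
    rewrite ?sat_Imp, ?sat_Iff; cbn [sat].
  - now apply sat_tautology.
  - intros H1 H2 v Hv. specialize (H1 v Hv). rewrite sat_Imp in H1. auto.
  - rewrite !sat_Dia. intros [v [Hv H]]. rewrite sat_Dia in H.
    destruct H as [u [Hu H]]. eauto.
  - rewrite sat_Dia. intros [v [Hv H]]. exact H.
  - split.
    + intros Hc v Hv. apply sat_Imp. intros Hf.
      rewrite (nonmodal_sat_indep V p X (fun u => X u /\ sat V f X u) v H). auto.
    + intros Hc v [Hv Hf].
      rewrite (nonmodal_sat_indep V p _ X v H).
      now apply (proj1 (sat_Imp V f p X v) (Hc v Hv)).
  - split; [intros H; split; intros v Hv; apply H, Hv|].
    intros [H1 H2] v Hv. split; auto.
  - intros H v Hv. apply sat_Or. auto.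
  - intros H v Hv u Hu. auto.
  - intros [H1 H2] v Hv.
    destruct (proj1 (sat_Or V _ _ _ _) (H1 v Hv)) as [Ha|Hb]; [exact Ha|].
    exfalso. exact (H2 Hb).
  - intros [H1 H2] v Hv.
    destruct (proj1 (sat_Or V _ _ _ _) (H1 v Hv)) as [Ha|Hb]; [exact Ha|].
    apply sat_Dia in Hb as [u [Hu Hb]]. exfalso. exact (H2 u Hu Hb).
  - intros H v Hv. apply sat_Dia. apply NNPP. intros H2. apply H.
    intros u Hu. apply NNPP. intros H3. apply H2. exists u. auto.
  - apply (sat_replace V a b); auto. intros X' w'. apply sat_Iff, IHHf.
  - specialize (IHHf1 W V X w). rewrite sat_Imp in IHHf1. auto.
  - intros v Hv. apply IHHf.
Qed.

(** * Completeness *)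

Fixpoint cnj (l : list form) : form :=
  match l with
  | [] => Top
  | a :: l' => And a (cnj l')
  end.

Lemma beval_cnj e l :
  beval e (cnj l) = true <-> (forall x, In x l -> beval e x = true).
Proof.
  induction l as [|a l IH]; simpl cnj.
  - rewrite beval_Top. split; [intros _ x []|reflexivity].
  - cbn [beval]. rewrite andb_true_iff, IH. split.
    + intros [Ha Hl] x [<-|Hx]; auto.
    + intros H. split; [apply H; now left | intros x Hx; apply H; now right].
Qed.

Lemma box_imp_cnj T y :
  yalcin (Imp (Box (Imp (cnj T) y)) (Imp (cnj (map Box T)) (Box y))).
Proof.
  revert y; induction T as [|t T IH]; intros y; simpl.
  - assert (H : yalcin (Imp (Imp Top y) y)) by prop_logic.
    apply box_mono in H. prop_logic.
  - assert (H : yalcin (Imp (Imp (And t (cnj T)) y) (Imp t (Imp (cnj T) y)))).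
    { prop_logic. }
    apply box_mono in H. pose proof (Y_K t (Imp (cnj T) y)).
    specialize (IH y). prop_logic.
Qed.

Lemma box_cnj_of_entails T x :
  (forall v, (forall t, In t T -> beval v t = true) -> beval v x = true) ->
  yalcin (Imp (cnj (map Box T)) (Box x)).
Proof.
  intros Hx. apply (Y_MP (Box (Imp (cnj T) x))); [apply box_imp_cnj|].
  apply Y_Nec, yalcin_of_beval_tautology. intros v.
  apply beval_Imp. intros HT. apply Hx, beval_cnj, HT.
Qed.

Definition canon_val (n : nat) (w : form -> bool) : Prop := w (Var n) = true.

Lemma canon_truth_nonmodal x X w :
  nonmodal x -> (sat canon_val x X w <-> beval w x = true).
Proof.
  induction x; simpl; intros Hx; try contradiction.
  - reflexivity.
  - rewrite IHx by exact Hx. now destruct (beval w x).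
  - destruct Hx. now rewrite IHx1, IHx2, andb_true_iff.
Qed.

Lemma canon_truth g X w :
  flat g ->
  (forall x, In x (box_atoms g) ->
     (forall v, X v -> beval v x = true) <-> w (Box x) = true) ->
  (sat canon_val g X w <-> beval w g = true).
Proof.
  induction g; simpl; intros Hg HX; try contradiction.
  - reflexivity.
  - rewrite IHg by assumption. now destruct (beval w g).
  - destruct Hg.
    rewrite IHg1, IHg2, andb_true_iff by (auto; intros; apply HX, in_or_app; auto).
    reflexivity.
  - rewrite <- HX by (now left).
    split; intros H v Hv; apply (canon_truth_nonmodal g X v Hg), H, Hv.
Qed.

Fixpoint sublists {A} (l : list A) : list (list A) :=
  match l with
  | [] => [[]]
  | x :: l' => sublists l' ++ map (cons x) (sublists l')
  end.

Lemma filter_in_sublists {A} (p : A -> bool) l : In (filter p l) (sublists l).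
Proof.
  induction l as [|x l IH]; simpl; [now left|].
  apply in_or_app. destruct (p x); [right; now apply in_map | now left].
Qed.

Lemma flat_complete f : flat f -> valid f -> yalcin f.
Proof.
  intros Hf Hv. set (M := box_atoms f).
  apply (yalcin_of_entails_theorems
           (flat_map (fun T => map (fun x => Imp (cnj (map Box T)) (Box x)) M)
              (sublists M))).
  intros e He.
  set (T := filter (fun x => e (Box x)) M).
  set (X := fun v : form -> bool => forall t, In t T -> beval v t = true).
  apply (canon_truth f X e Hf); [|apply Hv].
  intros x Hx. split.
  - intros Hent.
    assert (HT : beval e (cnj (map Box T)) = true).
    { apply beval_cnj. intros y Hy. apply in_map_iff in Hy as [t [<- Ht]].
      apply filter_In in Ht. apply Ht. }
    assert (Hin : In (Imp (cnj (map Box T)) (Box x))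
                    (flat_map (fun T => map (fun x => Imp (cnj (map Box T)) (Box x)) M)
                       (sublists M))).
    { apply in_flat_map. exists T. split; [apply filter_in_sublists|].
      now apply (in_map (fun x => Imp (cnj (map Box T)) (Box x))). }
    exact (proj1 (beval_Imp _ _ _) (He _ Hin (box_cnj_of_entails T x Hent)) HT).
  - intros Ex v Xv. apply Xv, filter_In. auto.
Qed.

Lemma completeness f : valid f -> yalcin f.
Proof.
  intros Hv. pose proof (red_correct f) as E.
  assert (Hred : yalcin (red f)).
  { apply flat_complete; [apply flat_red|]. intros W V X w.
    apply (proj1 (sat_Iff V f (red f) X w) (soundness _ E W V X w)), Hv. }
  prop_logic.
Qed.

Lemma sat_bigAnd {W} (V : nat -> W -> Prop) l X w :
  sat V (bigAnd l) X w <-> (forall x, In x l -> sat V x X w).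
Proof.
  induction l as [|a [|b l] IH].
  - simpl. split; [intros _ x []|intros _ [H1 H2]; auto].
  - simpl. split; [intros H x [<-|[]]; auto | intros H; auto].
  - change (sat V a X w /\ sat V (bigAnd (b :: l)) X w
            <-> forall x, In x (a :: b :: l) -> sat V x X w).
    rewrite IH. split.
    + intros [Ha Hl] x [<-|Hx]; auto.
    + intros H. split; [apply H; now left | intros x Hx; apply H; now right].
Qed.

Lemma inf_cons_valid S f :
  inf_cons S f <-> valid (Imp (bigAnd (map Box S)) (Box f)).
Proof.
  split.
  - intros Hc W V X w. rewrite sat_Imp, sat_bigAnd. intros H v Hv.
    apply (Hc W V X (inhabits w)); [|exact Hv].
    intros s Hs u Hu. exact (H (Box s) (in_map Box S s Hs) u Hu).
  - intros Hv W V X [w] HS v Hx. specialize (Hv W V X w).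
    rewrite sat_Imp, sat_bigAnd in Hv. apply Hv; [|exact Hx].
    intros y Hy. apply in_map_iff in Hy as [s [<- Hs]]. exact (HS s Hs).
Qed.

Theorem theorem1 :
  (forall f : form, valid f <-> yalcin f) /\
  (forall (S : list form) (f : form),
      inf_cons S f <-> yalcin (Imp (bigAnd (map Box S)) (Box f))).
Proof.
  assert (Hvalid : forall f, valid f <-> yalcin f)
    by (split; [apply completeness | apply soundness]).
  split; [exact Hvalid|].
  intros S f. rewrite inf_cons_valid. apply Hvalid.
Qed.
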